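(* Consider the procurement setting and the mechanism BFM-SWM described in the context, run with arbitrary inputs $B>0$, $\alpha>1$, $\beta>1$, $\epsilon>0$, $\ell\in\{1,2\}$. Then BFM-SWM is budget-feasible, i.e. its output $S^*$ with payments $p(u)$, $u\in S^*$, satisfies $p(S^* )=\sum_{u\in S^*}p(u)\le B$. It is obviously strategyproof (hence truthful), individually rational, and has non-negative auctioneer surplus, i.e. $v(S^* )-p(S^* )\ge 0$. Moreover, treating $\alpha$ as a constant and counting each evaluation of $v$ as one step, it runs in $\mathcal{O}\!\left(n\log\frac{OPT}{\epsilon}\right)$ time, where $OPT=\max\{v(S)-c(S): S\subseteq\mathcal{N},\ c(S)\le B\}$ is the welfare of an optimal solution.
   Context: Setting. $\mathcal{N}$ is a finite set of $n$ sellers, each owning one item. The auctioneer has a valuation $v:2^{\mathcal{N}}\to\mathbb{R}_{\ge 0}$ with $v(\emptyset)=0$ that is submodular (for $X\subseteq Y\subseteq\mathcal{N}$ and $u\notin Y$, $v(u\mid Y)\le v(u\mid X)$), not necessarily monotone, accessed through a value oracle; here $v(S\mid T)=v(S\cup T)-v(T)$, $v(u\mid T)=v(\{u\}\mid T)$ and $v(u)=v(\{u\})$. Each seller $u$ has a private cost $c(u)\ge 0$; $c(X)=\sum_{u\in X}c(u)$, $p(X)=\sum_{u\in X}p(u)$. $B>0$ is the budget, $[\ell]=\{1,\dots,\ell\}$. A seller offered a price $q$ either accepts or rejects; a truthful seller accepts iff $c(u)\le q$. A seller's utility is $p(u)-c(u)$ if it wins with payment $p(u)$ and $0$ otherwise.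 Mechanism BFM-SWM (inputs $B$, $\alpha>1$, $\beta>1$, $\epsilon>0$, $\ell\in\{1,2\}$): 1. Offer every seller the price $B$; let $R$ be the set of sellers who accept, and set $p(u)=B$ for $u\in R$. 2. Set $t=0$, $\rho_0=\epsilon/\alpha$, $u^*=\emptyset$ ($u^*$ is a set of at most one seller), and $S_{i,0}=\emptyset$ for $i\in[\ell]$. 3. Repeat rounds: set $t\leftarrow t+1$, $\rho_t=\alpha\rho_{t-1}$, $S_{i,t}=\emptyset$ for all $i\in[\ell]$. Process the sellers $u\in R\setminus(\bigcup_{i=1}^{\ell}S_{i,t-1}\cup u^* )$ one at a time in a fixed order. For each such $u$: pick $j\in\arg\max_{i\in[\ell]}v(u\mid S_{i,t})$ (current contents); update $p(u)\leftarrow\min\{p(u),\ v(u\mid S_{j,t})/(\beta+\rho_t/B)\}$ and offer $p(u)$ to $u$. If $u$ accepts: if $v(S_{j,t}\cup\{u\})-p(S_{j,t}\cup\{u\})>\rho_t$ (current prices), set $u^*\leftarrow\{u\}$ and end the round immediately; otherwise add $u$ to $S_{j,t}$. If $u$ rejects, remove $u$ from $R$. After the round, stop if $R\setminus\left(\bigcup_{i=1}^{\ell}(S_{i,t-1}\cup S_{i,t})\cup u^*\right)=\emptyset$; otherwise start another round. 4. Let $M$ be the final value of $t$. Output $S^*\in\arg\max_{A\in\{S_{i,t}: i\in[\ell],\ t\in\{M-1,M\}\}\cup\{u^*\}}\big(v(A)-p(A)\big)$, paying each $u\in S^*$ its current price $p(u)$. Obvious strategyproofness: at every point at which a seller's action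 under the truthful strategy differs from its action under some deviating strategy, the worst utility it can obtain by continuing truthfully is at least the best utility it can obtain by deviating (over all behaviours of the other sellers). Individual rationality: a truthful seller never obtains negative utility. *)

From HB Require Import structures.
From mathcomp Require Import all_boot all_order all_algebra.
From mathcomp Require Import reals exp.
Set Implicit Arguments. Unset Strict Implicit. Unset Printing Implicit Defensive.
Import Order.TTheory GRing.Theory Num.Theory.
Local Open Scope ring_scope.

(* Sellers are the ordinals 'I_n; the "fixed order" of the mechanism is the
   order of enum 'I_n (w.l.o.g., since v and c are arbitrary). *)

Section BFM.
Variable R : realType.
Variable n : nat.
Local Notation seller := 'I_n.

(* A public event: seller u was offered price q and answered a (true = accept). *)
Definition event := (seller * R * bool)%type.
Definition history := seq event.
(* A (behaviour) strategy of a seller: given the history so far and the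
   offered price, accept or reject. *)
Definition strategy := history -> R -> bool.
Definition profile := seller -> strategy.

Definition truthful (c : seller -> R) (u : seller) : strategy :=
  fun _ q => c u <= q.

Definition upd (sig : profile) (i : seller) (s : strategy) : profile :=
  fun j => if j == i then s else sig j.

Definition submodular (v : {set seller} -> R) : Prop :=
  forall (X Y : {set seller}) (u : seller), X \subset Y -> u \notin Y ->
    v (u |: Y) - v Y <= v (u |: X) - v X.

Definition psum (p : seller -> R) (A : {set seller}) : R := \sum_(w in A) p w.

Definition csum (c : seller -> R) (A : {set seller}) : R := \sum_(w in A) c w.

(* OPT = max { v(S) - c(S) : c(S) <= B } (the empty set is feasible, value 0). *)
Definition OPT (v : {set seller} -> R) (c : seller -> R) (B : R) : R :=
  \big[Num.max/0]_(S : {set seller} | csum c S <= B) (v S - csum c S).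

(* State of the mechanism. st_Sprev i = S_{i,t-1}, st_Scur i = S_{i,t}
   (i < l), st_steps counts oracle evaluations of v plus price offers. *)
Record state := St {
  st_hist : history;
  st_p : seller -> R;
  st_R : {set seller};
  st_ustar : {set seller};
  st_Sprev : nat -> {set seller};
  st_Scur : nat -> {set seller};
  st_rho : R;
  st_steps : nat }.

(* first index in [0, l) maximizing f (ties broken towards the smallest index) *)
Definition argmax_first (l : nat) (f : nat -> R) : nat :=
  foldl (fun j i => if f j < f i then i else j) 0%N (iota 1 l.-1).

Variables (v : {set seller} -> R) (B alpha beta eps : R) (l : nat) (sig : profile).

Definition unionS (S : nat -> {set seller}) : {set seller} :=
  \bigcup_(i < l) S i.

Definition step1_one (st : state) (u : seller) : state :=
  let a := sig u (st_hist st) B in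
  St (rcons (st_hist st) (u, B, a)) (st_p st)
     (if a then u |: st_R st else st_R st)
     (st_ustar st) (st_Sprev st) (st_Scur st) (st_rho st) (st_steps st).+1.

Definition init_state : state :=
  foldl step1_one
    (St [::] (fun _ => B) set0 set0 (fun _ => set0) (fun _ => set0)
        (eps / alpha) 0%N)
    (enum 'I_n).

(* Processing one seller u inside a round; the boolean flags that the round
   has ended (u* was set). *)
Definition process (sd : state * bool) (u : seller) : state * bool :=
  let: (st, done) := sd in
  if done then sd else
  let S := st_Scur st in
  let m := fun i => v (u |: S i) - v (S i) in            (* 2 evaluations each *)
  let j := argmax_first l m in
  let q := Num.min (st_p st u) (m j / (beta + st_rho st / B)) in
  let p' := fun w => if w == u then q else st_p st w in
  let a := sig u (st_hist st) q in                      (* 1 offer *)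
  let h' := rcons (st_hist st) (u, q, a) in
  let k := (st_steps st + 2 * l + 1)%N in
  if a then
    if st_rho st < v (u |: S j) - psum p' (u |: S j) then  (* 1 evaluation *)
      (St h' p' (st_R st) [set u] (st_Sprev st) S (st_rho st) k.+1, true)
    else
      (St h' p' (st_R st) (st_ustar st) (st_Sprev st)
          (fun i => if i == j then u |: S i else S i) (st_rho st) k.+1, false)
  else (St h' p' (st_R st :\ u) (st_ustar st) (st_Sprev st) S (st_rho st) k,
        false).

Definition round (st : state) : state :=
  let Sprev := st_Scur st in
  let todo := [seq u <- enum 'I_n |
                u \in st_R st :\: (unionS Sprev :|: st_ustar st)] in
  let st0 := St (st_hist st) (st_p st) (st_R st) (st_ustar st) Sprev
                (fun _ => set0) (alpha * st_rho st) (st_steps st) in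
  (foldl process (st0, false) todo).1.

Definition state_after (t : nat) : state := iter t round init_state.

Definition stopped (st : state) : bool :=
  st_R st :\: (unionS (st_Sprev st) :|: unionS (st_Scur st) :|: st_ustar st)
    == set0.

Definition first_stop (M : nat) : Prop :=
  (0 < M)%N /\ stopped (state_after M) /\
  forall t, (0 < t < M)%N -> ~~ stopped (state_after t).

Definition surplus (st : state) (A : {set seller}) : R :=
  v A - psum (st_p st) A.

(* candidates {S_{i,t} : i in [l], t in {M-1, M}} and u* *)
Definition candidates (st : state) : seq {set seller} :=
  [seq st_Sprev st i | i <- iota 0 l] ++ [seq st_Scur st i | i <- iota 0 l]
  ++ [:: st_ustar st].

Definition best (st : state) : {set seller} :=
  let cs := candidates st in
  foldl (fun X A => if surplus st X < surplus st A then A else X)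
        (head set0 cs) (behead cs).

Definition winners (M : nat) : {set seller} := best (state_after M).
Definition payment (M : nat) (u : seller) : R := st_p (state_after M) u.
(* total number of steps: offers + evaluations of v (step 4 evaluates v once
   per candidate) *)
Definition total_steps (M : nat) : nat :=
  (st_steps (state_after M) + size (candidates (state_after M)))%N.
Definition final_history (M : nat) : history := st_hist (state_after M).

Definition reaches (M : nat) (h : history) (i : seller) (q : R) : Prop :=
  exists (a : bool) (s : history), final_history M = rcons h (i, q, a) ++ s.

End BFM.

Section Props.
Variable R : realType.
Variable n : nat.
Variables (v : {set 'I_n} -> R) (c : 'I_n -> R) (B alpha beta eps : R) (l : nat).

Local Notation first_stop sig M := (first_stop v B alpha beta eps l sig M).

Definition utility (sig : profile R n) (M : nat) (i : 'I_n) : R :=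
  if i \in winners v B alpha beta eps l sig M
  then payment v B alpha beta eps l sig M i - c i else 0.

Definition terminates : Prop :=
  forall sig : profile R n, exists M, first_stop sig M.

Definition budget_feasible : Prop :=
  forall (sig : profile R n) M, first_stop sig M ->
    psum (payment v B alpha beta eps l sig M)
         (winners v B alpha beta eps l sig M) <= B.

Definition nonneg_surplus : Prop :=
  forall (sig : profile R n) M, first_stop sig M ->
    0 <= v (winners v B alpha beta eps l sig M)
         - psum (payment v B alpha beta eps l sig M)
                (winners v B alpha beta eps l sig M).

Definition individually_rational : Prop :=
  forall (sig : profile R n) (i : 'I_n) M,
    sig i = truthful c i -> first_stop sig M -> 0 <= utility sig M i.

Definition truthful_mech : Prop :=
  forall (sig : profile R n) (i : 'I_n) (s' : strategy R n) M1 M2,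
    first_stop (upd sig i (truthful c i)) M1 ->
    first_stop (upd sig i s') M2 ->
    utility (upd sig i s') M2 i <= utility (upd sig i (truthful c i)) M1 i.

(* obvious strategyproofness: at every decision node h (seller i offered q)
   reached both under truthful play of i and under the deviating strategy s',
   at which the two strategies prescribe different actions, every outcome of
   truthful play (any behaviour of the others) is at least as good for i as
   every outcome of deviating (any behaviour of the others). *)
Definition obviously_strategyproof : Prop :=
  forall (i : 'I_n) (s' : strategy R n) (sig1 sig2 : profile R n)
         (M1 M2 : nat) (h : history R n) (q : R),
    sig1 i = truthful c i -> sig2 i = s' ->
    first_stop sig1 M1 -> first_stop sig2 M2 ->
    reaches v B alpha beta eps l sig1 M1 h i q ->
    reaches v B alpha beta eps l sig2 M2 h i q ->
    s' h q != truthful c i h q ->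
    utility sig2 M2 i <= utility sig1 M1 i.

Definition all_truthful : profile R n := fun u => truthful c u.

Definition runtime_bound (C : R) : Prop :=
  forall M, first_stop all_truthful M ->
    (total_steps v B alpha beta eps l all_truthful M)%:R
      <= C * (n.+1)%:R * (1 + ln (1 + OPT v c B / eps)).

End Props.

From mathcomp Require Import all_boot all_order all_algebra.
From mathcomp Require Import reals exp.
From mathcomp Require Import ring lra zify.
Import Order.TTheory GRing.Theory Num.Theory.
Local Open Scope ring_scope.
Set Implicit Arguments. Unset Strict Implicit. Unset Printing Implicit Defensive.

(* The mechanism keeps, for every set S under construction in round t, the
   certificate (beta + rho_t/B) p(S) <= v(S) <= p(S) + rho_t.  It yields
   (beta - 1) p(S) + rho_t p(S) / B <= rho_t, hence p(S) <= B, and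
   v(S) >= p(S); prices only decrease, so a certificate survives later price
   cuts of sellers outside S, and u* is feasible because its price is at most
   v({u*})/beta.  Every output candidate is thus budget-feasible with
   nonnegative surplus.  A seller is paid at most every price it accepted and
   is excluded once it rejects, so accepting exactly the offers covering its
   cost is obviously dominant; a deviation that never changes an answer does
   not change the run at all.  A round that does not stop ends with a u* of
   surplus > rho_t, which is at most 2 OPT for truthful sellers; as rho_t
   grows geometrically there are O(log(OPT/eps)) rounds of O(n) steps each. *)

Section Preliminaries.
Variables (R : realType) (n : nat).
Implicit Types (sig : profile R n) (H : history R n).

Definition consistent sig H : Prop :=
  forall H1 e H2, H = H1 ++ e :: H2 -> sig e.1.1 H1 e.1.2 = e.2.

Lemma consistent_nil sig : consistent sig [::].
Proof. by move=> [|? ?] e H2. Qed.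

Lemma consistent_prefix sig H H' : prefix H H' -> consistent sig H' -> consistent sig H.
Proof. by case/prefixP=> s -> h H1 e H2 E; apply: (h H1 e (H2 ++ s)); rewrite E -catA. Qed.

Lemma consistent_rcons sig H e :
  consistent sig H -> sig e.1.1 H e.1.2 = e.2 -> consistent sig (rcons H e).
Proof.
move=> h he H1 e' H2; case/lastP: H2 => [|H2 x].
  by rewrite cats1 => /rcons_inj [<- <-].
by rewrite -rcons_cons -rcons_cat => /rcons_inj [E _]; apply: h E.
Qed.

Lemma consistent_last sig H e : consistent sig (rcons H e) -> sig e.1.1 H e.1.2 = e.2.
Proof. by move/(_ H e [::]); rewrite cats1; apply. Qed.

Lemma consistent_mem sig H w q a :
  consistent sig H -> (w, q, a) \in H -> exists H1, sig w H1 q = a.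
Proof.
by move=> h hm; case/splitPr: hm h => H1 H2 h; exists H1; apply: (h H1 (w, q, a) H2).
Qed.

Lemma consistent_upd_truthful (c : 'I_n -> R) sig i s H :
  consistent (upd sig i s) H ->
  (forall e, e \in H -> e.1.1 = i -> e.2 = (c i <= e.1.2)) ->
  consistent (upd sig i (truthful c i)) H.
Proof.
move=> h hi H1 e H2 E; rewrite /upd; case: eqP => [ei|ne].
  by rewrite (hi e) // E mem_cat inE eqxx orbT.
by have := h H1 e H2 E; rewrite /upd; case: eqP.
Qed.

Lemma foldl_prefix (X Y : Type) (hist : X -> history R n) (F : X -> Y -> X) :
  (forall x y, prefix (hist x) (hist (F x y))) ->
  forall s x, prefix (hist x) (hist (foldl F x s)).
Proof.
move=> hF; elim=> [|y s IH] x /=; first exact: prefix_refl.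
exact: prefix_trans (hF x y) (IH _).
Qed.

Lemma foldl_agree (X Y : Type) (hist : X -> history R n) (F G : X -> Y -> X) sig :
  (forall x y, prefix (hist x) (hist (G x y))) ->
  (forall x y, consistent sig (hist (G x y)) -> F x y = G x y) ->
  forall s x, consistent sig (hist (foldl G x s)) -> foldl F x s = foldl G x s.
Proof.
move=> hG hFG; elim=> [|y s IH] x //= h.
rewrite hFG ?IH //; exact: consistent_prefix (foldl_prefix hG s _) h.
Qed.

Lemma foldl_pick_ind (T : eqType) (P : T -> Prop) (f : T -> T -> bool) x0 s :
  P x0 -> {in s, forall x, P x} ->
  P (foldl (fun x y => if f x y then y else x) x0 s).
Proof.
elim: s x0 => [|y s IH] x0 //= P0 Ps; apply: IH => [|x hx]; last first.
  by apply: Ps; rewrite inE hx orbT.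
by case: ifP => // _; apply: Ps; rewrite inE eqxx.
Qed.

Lemma eq_psum (p p' : 'I_n -> R) (X : {set 'I_n}) :
  {in X, p =1 p'} -> psum p X = psum p' X.
Proof. by move=> h; apply: eq_bigr. Qed.

Lemma psumU1 (p : 'I_n -> R) u (X : {set 'I_n}) : u \notin X -> psum p (u |: X) = p u + psum p X.
Proof. by move=> h; rewrite /psum big_setU1. Qed.

Lemma psum1 (p : 'I_n -> R) u : psum p [set u] = p u.
Proof. by rewrite /psum big_set1. Qed.

Lemma psum0 (p : 'I_n -> R) : psum p set0 = 0.
Proof. by rewrite /psum big_set0. Qed.

Lemma bernoulli_ineq (a : R) t : 1 <= a -> 1 + t%:R * (a - 1) <= a ^+ t.
Proof.
move=> a1; elim: t => [|t IH]; first by rewrite mul0r addr0 expr0.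
rewrite exprS -natr1; apply: le_trans (ler_wpM2l (le_trans ler01 a1) IH).
have -> : a * (1 + t%:R * (a - 1)) =
  1 + (t%:R + 1) * (a - 1) + t%:R * (a - 1) * (a - 1) by ring.
by rewrite lerDl !mulr_ge0 // subr_ge0.
Qed.

Lemma ln_pow_lt (a y : R) k : 1 < a -> 0 < y -> a ^+ k < 2 * y ->
  k%:R < (ln a)^-1 * (1 + ln y).
Proof.
move=> a1 y0 lt_ak; have a0 : 0 < a by apply: lt_trans a1.
have la := ln_gt0 a1.
have : ln (a ^+ k) < ln (2 * y) by rewrite ltr_ln // posrE ?exprn_gt0 ?mulr_gt0.
rewrite lnXn // lnM ?posrE // -[ln a *+ k]mulr_natl => lt_ln.
have ln2 : ln (2 : R) <= 1 by have := @le_ln1Dx R 1; apply; lra.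
by rewrite ltr_pdivlMl //; lra.
Qed.

End Preliminaries.

Section Mechanism.
Variables (R : realType) (n : nat) (v : {set 'I_n} -> R) (B alpha beta eps : R).
Variable l : nat.
Hypotheses (v0 : v set0 = 0) (v_ge0 : forall S, 0 <= v S) (v_submod : submodular v).
Hypotheses (B_gt0 : 0 < B) (alpha_gt1 : 1 < alpha) (beta_gt1 : 1 < beta).
Hypotheses (eps_gt0 : 0 < eps) (l12 : (l = 1 \/ l = 2)%N).
Implicit Types (st : state R n) (sig : profile R n) (p : 'I_n -> R) (X : {set 'I_n}).

Definition marginal st u i := v (u |: st_Scur st i) - v (st_Scur st i).
Definition target st u := argmax_first l (marginal st u).
Definition price_scale st := beta + st_rho st / B.
Definition offer st u :=
  Num.min (st_p st u) (marginal st u (target st u) / price_scale st).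
Definition offer_prices st u : 'I_n -> R :=
  fun w => if w == u then offer st u else st_p st w.

Definition exceeds_rho st u :=
  let S := u |: st_Scur st (target st u) in
  st_rho st < v S - psum (offer_prices st u) S.

Definition process_answer (a : bool) st u : state R n * bool :=
  let S := st_Scur st in
  let j := target st u in
  let h' := rcons (st_hist st) (u, offer st u, a) in
  let k := (st_steps st + 2 * l + 1)%N in
  if a then
    if exceeds_rho st u then
      (St h' (offer_prices st u) (st_R st) [set u] (st_Sprev st) S (st_rho st) k.+1, true)
    else
      (St h' (offer_prices st u) (st_R st) (st_ustar st) (st_Sprev st)
          (fun i => if i == j then u |: S i else S i) (st_rho st) k.+1, false)
  else (St h' (offer_prices st u) (st_R st :\ u) (st_ustar st) (st_Sprev st) S
           (st_rho st) k, false).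

Lemma processE sig st u :
  process v B beta l sig (st, false) u =
  process_answer (sig u (st_hist st) (offer st u)) st u.
Proof. by []. Qed.

Definition initial_offer (a : bool) st u : state R n :=
  St (rcons (st_hist st) (u, B, a)) (st_p st)
     (if a then u |: st_R st else st_R st)
     (st_ustar st) (st_Sprev st) (st_Scur st) (st_rho st) (st_steps st).+1.

Lemma step1_oneE sig st u :
  step1_one B sig st u = initial_offer (sig u (st_hist st) B) st u.
Proof. by []. Qed.

Definition round_start st :=
  St (st_hist st) (st_p st) (st_R st) (st_ustar st) (st_Scur st)
     (fun _ => set0) (alpha * st_rho st) (st_steps st).
Definition round_todo st :=
  [seq u <- enum 'I_n | u \in st_R st :\: (unionS l (st_Scur st) :|: st_ustar st)].

Lemma roundE sig st : round v B alpha beta l sig st =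
  (foldl (process v B beta l sig) (round_start st, false) (round_todo st)).1.
Proof. by []. Qed.

Lemma argmax_first_lt (f : nat -> R) : (argmax_first l f < l)%N.
Proof. by case: l12 => ->; rewrite /argmax_first //=; case: ifP. Qed.

Lemma unionSP (S : nat -> {set 'I_n}) w :
  reflect (exists2 i, (i < l)%N & w \in S i) (w \in unionS l S).
Proof.
apply: (iffP bigcupP) => [[i _ h]|[i hi h]]; first by exists i.
by exists (Ordinal hi).
Qed.

(* v need not be monotone, so marginals and hence prices can be negative;
   -vbound bounds them from below. *)
Definition vbound := \sum_(S : {set 'I_n}) v S.

Lemma le_vbound S : v S <= vbound.
Proof. by rewrite /vbound (bigD1 S) //= lerDl; apply: sumr_ge0 => T _; apply: v_ge0. Qed.

Lemma vbound_ge0 : 0 <= vbound.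
Proof. exact: le_trans (v_ge0 set0) (le_vbound set0). Qed.

Definition certified r p X :=
  (beta + r / B) * psum p X <= v X /\ v X - psum p X <= r.
Definition certifiable p X := exists2 r : R, 0 < r & certified r p X.
Definition feasible p X := psum p X <= B /\ 0 <= v X - psum p X.

Lemma certifiable_feasible p X : certifiable p X -> feasible p X.
Proof.
case=> r r0 [h1 h2]; rewrite /feasible; move: h1 h2; set P := psum p X => h1 h2.
have vX := v_ge0 X; have hb := beta_gt1; have hB := B_gt0.
set s := r / B in h1.
have s0 : 0 < s by rewrite divr_gt0.
have rE : r = s * B by rewrite /s divfK // gt_eqF.
rewrite rE in h2; clearbody P s.
case: (lerP P 0) => hP; first by split; lra.
split.
  case: (lerP P B) => // hPB; exfalso.
  have : 0 < s * (P - B) by apply: mulr_gt0; lra.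
  have : 0 < (beta - 1) * P by apply: mulr_gt0; lra.
  nra.
have : 0 <= (beta + s - 1) * P by apply: mulr_ge0; lra.
nra.
Qed.

Definition selected st w : Prop :=
  (exists2 i, (i < l)%N & w \in st_Sprev st i) \/
  (exists2 i, (i < l)%N & w \in st_Scur st i) \/ w \in st_ustar st.

Record invariant sig st : Prop := {
  inv_rho_gt0 : 0 < st_rho st;
  inv_price_bounds : forall w, -vbound <= st_p st w <= B;
  inv_prev : forall i, (i < l)%N -> certifiable (st_p st) (st_Sprev st i);
  inv_cur : forall i, (i < l)%N -> certified (st_rho st) (st_p st) (st_Scur st i);
  inv_ustar : feasible (st_p st) (st_ustar st);
  inv_consistent : consistent sig (st_hist st);
  inv_price_le_offer : forall w q a, (w, q, a) \in st_hist st -> st_p st w <= q;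
  inv_rejected : forall w q, (w, q, false) \in st_hist st -> w \notin st_R st;
  inv_selected_in_R : forall w, selected st w -> w \in st_R st;
  inv_selected_accepted : forall w, selected st w -> (w, st_p st w, true) \in st_hist st }.

Section OfferFacts.
Variables (sig : profile R n) (st : state R n) (u : 'I_n).
Hypotheses (I : invariant sig st) (u_fresh : ~ selected st u).

Lemma price_scale_gt1 : 1 < price_scale st.
Proof.
have := beta_gt1; have : 0 <= st_rho st / B by rewrite divr_ge0 // ltW // (inv_rho_gt0 I).
rewrite /price_scale; lra.
Qed.

Lemma offer_le_price : offer st u <= st_p st u.
Proof. by rewrite /offer ge_min lexx. Qed.

Lemma offer_le_marginal : offer st u * price_scale st <= marginal st u (target st u).
Proof.
have d0 : 0 < price_scale st by have := price_scale_gt1; lra.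
by rewrite -ler_pdivlMr // /offer ge_min lexx orbT.
Qed.

Lemma target_lt : (target st u < l)%N.
Proof. exact: argmax_first_lt. Qed.

Lemma fresh_notin_cur i : (i < l)%N -> u \notin st_Scur st i.
Proof. by move=> hi; apply/negP => h; apply: u_fresh; right; left; exists i. Qed.

Lemma fresh_notin_ustar : u \notin st_ustar st.
Proof. by apply/negP => h; apply: u_fresh; right; right. Qed.

Lemma psum_offer_prices X :
  u \notin X -> psum (offer_prices st u) X = psum (st_p st) X.
Proof.
move=> uX; apply: eq_psum => w wX; rewrite /offer_prices; case: eqP => // wu.
by rewrite -wu wX in uX.
Qed.

Lemma offer_ge : -vbound <= offer st u.
Proof.
have d1 := price_scale_gt1; have V0 := vbound_ge0.
rewrite /offer le_min; apply/andP; split; first by case/andP: (inv_price_bounds I u).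
have d0 : 0 < price_scale st by lra.
rewrite ler_pdivlMr //.
have : - vbound <= marginal st u (target st u).
  rewrite /marginal; have := v_ge0 (u |: st_Scur st (target st u)).
  have := le_vbound (st_Scur st (target st u)); lra.
have : 0 <= vbound * (price_scale st - 1) by apply: mulr_ge0; lra.
nra.
Qed.

Lemma marginal_le_single : marginal st u (target st u) <= v [set u].
Proof.
have := v_submod (sub0set (st_Scur st (target st u))) (fresh_notin_cur target_lt).
by rewrite setU0 v0 subr0.
Qed.

Lemma single_feasible : feasible (offer_prices st u) [set u].
Proof.
rewrite /feasible psum1 /offer_prices eqxx; split.
  by apply: le_trans offer_le_price _; case/andP: (inv_price_bounds I u).
have := offer_le_marginal; have := marginal_le_single.
have := price_scale_gt1; have := v_ge0 [set u].
set q := offer st u; set d := price_scale st; set m := marginal _ _ _ => h1 h2 h3 h4.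
case: (lerP q 0) => hq; first by lra.
have : 0 <= q * (d - 1) by apply: mulr_ge0; lra.
nra.
Qed.

Lemma cur_certified_offer i :
  (i < l)%N -> certified (st_rho st) (offer_prices st u) (st_Scur st i).
Proof.
by move=> hi; rewrite /certified psum_offer_prices ?(fresh_notin_cur hi) //; exact: (inv_cur I hi).
Qed.

Lemma ustar_feasible_offer : feasible (offer_prices st u) (st_ustar st).
Proof. by rewrite /feasible psum_offer_prices ?fresh_notin_ustar //; apply: (inv_ustar I). Qed.

Lemma certified_add : ~~ exceeds_rho st u ->
  certified (st_rho st) (offer_prices st u) (u |: st_Scur st (target st u)).
Proof.
rewrite /exceeds_rho -leNgt => hc; split => //.
have hu := fresh_notin_cur target_lt.
rewrite psumU1 // psum_offer_prices // {1}/offer_prices eqxx.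
have h2 := offer_le_marginal; case: (inv_cur I target_lt) => h1 _.
move: h1 h2; rewrite /marginal /price_scale.
set q := offer st u; set P := psum _ _; set d := beta + _ => h1 h2.
rewrite mulrDr [d * q]mulrC; lra.
Qed.

End OfferFacts.

Lemma invariant_process sig st u a (st' : state R n) :
  invariant sig st -> u \in st_R st -> ~ selected st u ->
  sig u (st_hist st) (offer st u) = a ->
  st_hist st' = rcons (st_hist st) (u, offer st u, a) ->
  st_p st' = offer_prices st u -> st_rho st' = st_rho st ->
  st_Sprev st' = st_Sprev st ->
  st_R st' = (if a then st_R st else st_R st :\ u) ->
  (forall w, selected st' w -> selected st w \/ (w = u /\ a)) ->
  (forall i, (i < l)%N -> certified (st_rho st) (offer_prices st u) (st_Scur st' i)) ->
  feasible (offer_prices st u) (st_ustar st') ->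
  invariant sig st'.
Proof.
move=> I uR u_fresh ha eh ep er eP eR eS hcur hu.
have le_p w : offer_prices st u w <= st_p st w.
  by rewrite /offer_prices; case: eqP => [->|]; first exact: offer_le_price.
have ne_p w : w != u -> offer_prices st u w = st_p st w.
  by rewrite /offer_prices => /negbTE ->.
have ne_u w : selected st w -> w != u by move=> hw; apply/eqP => wu; rewrite wu in hw.
split; rewrite ?ep ?er ?eh.
- exact: (inv_rho_gt0 I).
- move=> w; rewrite /offer_prices; case: eqP => [_|_]; last exact: (inv_price_bounds I).
  rewrite (offer_ge u I) /=; apply: le_trans (offer_le_price _ _) _.
  by case/andP: (inv_price_bounds I u).
- move=> i hi; rewrite eP; case: (inv_prev I hi) => r r0 [h1 h2]; exists r => //.
  rewrite /certified -(eq_psum (p := st_p st)) // => w hw.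
  by rewrite ne_p // ne_u //; left; exists i.
- by [].
- by [].
- by apply: consistent_rcons => //; apply: (inv_consistent I).
- move=> w q a'; rewrite mem_rcons in_cons => /orP [/eqP [-> -> _]|hm].
    by rewrite /offer_prices eqxx.
  exact: le_trans (le_p w) (inv_price_le_offer I hm).
- move=> w q; rewrite eR mem_rcons in_cons => /orP [/eqP [-> _ <-]|hm].
    by rewrite !inE eqxx.
  by have := inv_rejected I hm; case: (a) => //=; rewrite !inE => /negbTE ->; rewrite andbF.
- move=> w /eS [hw|[-> ha']]; rewrite eR; first last.
    by rewrite ha'.
  by case: (a); rewrite ?inE (inv_selected_in_R I hw) ?ne_u.
- move=> w /eS [hw|[-> ha']]; rewrite mem_rcons in_cons; last by rewrite /offer_prices eqxx ha' eqxx.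
  by rewrite ne_p ?ne_u // (inv_selected_accepted I hw) orbT.
Qed.

Lemma certified_set0 r p : 0 <= r -> certified r p set0.
Proof. by move=> r0; rewrite /certified psum0 v0 mulr0 subr0. Qed.

Definition covered st :=
  unionS l (st_Sprev st) :|: unionS l (st_Scur st) :|: st_ustar st.

Definition flagged st := exists j u, [/\ (j < l)%N, u \notin st_Scur st j,
  st_ustar st = [set u] &
  st_rho st < v (u |: st_Scur st j) - psum (st_p st) (u |: st_Scur st j)].

Definition steps_per_offer := (2 * l + 2)%N.

Record round_invariant sig s0 (todo : seq 'I_n) (sd : state R n * bool)
    (rem : seq 'I_n) : Prop := {
  ri_inv : invariant sig sd.1;
  ri_rho : st_rho sd.1 = st_rho s0;
  ri_prev : st_Sprev sd.1 = st_Sprev s0;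
  ri_uniq : uniq rem;
  ri_unselected : forall w, w \in rem -> ~ selected sd.1 w;
  ri_in_R : forall w, w \in rem -> w \in st_R sd.1;
  ri_cover : ~~ sd.2 -> forall w, w \in st_R sd.1 -> w \in rem \/ w \in covered sd.1;
  ri_flagged : sd.2 -> flagged sd.1;
  ri_steps : (st_steps sd.1 + steps_per_offer * size rem
              <= st_steps s0 + steps_per_offer * size todo)%N }.

Lemma round_invariant_done sig s0 todo st u rem :
  round_invariant sig s0 todo (st, true) (u :: rem) ->
  round_invariant sig s0 todo (st, true) rem.
Proof.
case=> I er eP /= /andP [_ urem] hsel hR _ hflag hsteps; split => //=.
- by move=> w hw; apply: hsel; rewrite inE hw orbT.
- by move=> w hw; apply: hR; rewrite inE hw orbT.
- by apply: leq_trans hsteps; rewrite leq_add2l leq_mul2l leqnSn orbT.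
Qed.

Section RoundStep.
Variables (sig : profile R n) (s0 : state R n) (todo : seq 'I_n).
Variables (st : state R n) (u : 'I_n) (rem : seq 'I_n).
Hypothesis F : round_invariant sig s0 todo (st, false) (u :: rem).

Lemma step_invariant : invariant sig st.
Proof. exact: (ri_inv F). Qed.

Lemma step_fresh : ~ selected st u.
Proof. by apply: (ri_unselected F); rewrite inE eqxx. Qed.

Lemma step_in_R : u \in st_R st.
Proof. by apply: (ri_in_R F); rewrite inE eqxx. Qed.

Lemma step_notin_rem : u \notin rem.
Proof. by have /andP [] := ri_uniq F. Qed.

Lemma round_invariant_next (st' : state R n) (flag : bool) :
  invariant sig st' -> st_rho st' = st_rho st -> st_Sprev st' = st_Sprev st ->
  (forall w, selected st' w -> selected st w \/ w = u) ->
  (forall w, w \in st_R st -> w != u -> w \in st_R st') ->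
  (~~ flag -> forall w, w \in st_R st' -> w \in rem \/ w \in covered st') ->
  (flag -> flagged st') ->
  (st_steps st' <= st_steps st + steps_per_offer)%N ->
  round_invariant sig s0 todo (st', flag) rem.
Proof.
move=> I' er eP sel inR cov fl steps.
have ne_u w : w \in rem -> w != u.
  by move=> hw; apply: contraTneq hw => ->; exact: step_notin_rem.
have mem_rem w : w \in rem -> w \in u :: rem by move=> hw; rewrite inE hw orbT.
split => //=.
- by rewrite er (ri_rho F).
- by rewrite eP (ri_prev F).
- by have /andP [] := ri_uniq F.
- move=> w hw /sel [hs|wu]; last by move/eqP: (ne_u w hw).
  exact: (ri_unselected F (mem_rem w hw)).
- by move=> w hw; apply: inR (ne_u w hw); apply: (ri_in_R F (mem_rem w hw)).
- by have := ri_steps F; rewrite /= mulnS; lia.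
Qed.

Lemma round_invariant_flagged :
  sig u (st_hist st) (offer st u) -> exceeds_rho st u ->
  round_invariant sig s0 todo (process_answer true st u) rem.
Proof.
move=> acc hc; rewrite /process_answer hc; set st' := St _ _ _ _ _ _ _ _.
have sel w : selected st' w -> selected st w \/ w = u.
  by move=> [hw|[hw|/set1P ->]]; [left; left | left; right; left | right].
have I' : invariant sig st'.
  apply: (invariant_process step_invariant step_in_R step_fresh acc) => //.
  - by move=> w /sel [|->]; [left | right].
  - by move=> i hi; exact: (cur_certified_offer step_invariant step_fresh hi).
  - exact: (single_feasible step_invariant step_fresh).
apply: round_invariant_next => //=.
- move=> _; exists (target st u), u; split => //; first exact: target_lt.
  exact: (fresh_notin_cur step_fresh (target_lt st u)).
- by rewrite /steps_per_offer; lia.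
Qed.

Lemma round_invariant_added :
  sig u (st_hist st) (offer st u) -> ~~ exceeds_rho st u ->
  round_invariant sig s0 todo (process_answer true st u) rem.
Proof.
move=> acc hc; rewrite /process_answer (negbTE hc); set st' := St _ _ _ _ _ _ _ _.
have sel w : selected st' w -> selected st w \/ w = u.
  move=> [hw|[[i hi]|hw]]; [by left; left | | by left; right; right].
  rewrite /=; case: ifP => [/eqP ->|_] hw; last by left; right; left; exists i.
  case/setU1P: hw => [->|hw]; [by right | left; right; left].
  by exists (target st u) => //; apply: target_lt.
have I' : invariant sig st'.
  apply: (invariant_process step_invariant step_in_R step_fresh acc) => //.
  - by move=> w /sel [|->]; [left | right].
  - move=> i hi /=; case: ifP => [/eqP ->|_].
      exact: (certified_add step_invariant step_fresh).
    exact: (cur_certified_offer step_invariant step_fresh hi).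
  - exact: (ustar_feasible_offer step_invariant step_fresh).
apply: round_invariant_next => //=.
- move=> _ w wR; case: (ri_cover F isT wR) => [|hw].
    rewrite inE => /orP [/eqP ->|->]; last by left.
    right; rewrite !inE; apply/orP; left; apply/orP; right.
    by apply/unionSP; exists (target st u); rewrite /= ?eqxx ?setU11 // target_lt.
  right; move: hw; rewrite !inE => /orP [/orP [->|hw]|->]; rewrite ?orbT //.
  apply/orP; left; apply/orP; right; case/unionSP: hw => i hi hw.
  by apply/unionSP; exists i => //=; case: ifP => // _; rewrite setU1r.
- by rewrite /steps_per_offer; lia.
Qed.

Lemma round_invariant_rejected :
  sig u (st_hist st) (offer st u) = false ->
  round_invariant sig s0 todo (process_answer false st u) rem.
Proof.
move=> rej; rewrite /process_answer; set st' := St _ _ _ _ _ _ _ _.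
have I' : invariant sig st'.
  apply: (invariant_process step_invariant step_in_R step_fresh rej) => //.
  - by move=> w; left.
  - by move=> i hi; exact: (cur_certified_offer step_invariant step_fresh hi).
  - exact: (ustar_feasible_offer step_invariant step_fresh).
apply: round_invariant_next => //=.
- by move=> w; left.
- by move=> w wR wu; rewrite !inE wu wR.
- move=> _ w /setD1P [wu wR].
  case: (ri_cover F isT wR) => [|hw]; last by right.
  by rewrite inE (negbTE wu) /= => ->; left.
- by rewrite /steps_per_offer; lia.
Qed.

Lemma round_invariant_process :
  round_invariant sig s0 todo (process v B beta l sig (st, false) u) rem.
Proof.
rewrite processE; case ha: (sig u (st_hist st) (offer st u)).
  by case: (boolP (exceeds_rho st u));
    [apply: round_invariant_flagged | apply: round_invariant_added]; rewrite ha.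
exact: round_invariant_rejected.
Qed.

End RoundStep.

Lemma round_invariant_step sig s0 todo sd u rem :
  round_invariant sig s0 todo sd (u :: rem) ->
  round_invariant sig s0 todo (process v B beta l sig sd u) rem.
Proof.
by case: sd => st [] F; [exact: round_invariant_done F | exact: round_invariant_process].
Qed.

Lemma round_invariant_foldl sig s0 todo sd rem :
  round_invariant sig s0 todo sd rem ->
  round_invariant sig s0 todo (foldl (process v B beta l sig) sd rem) [::].
Proof. by elim: rem sd => [|u rem IH] sd F //=; apply/IH/round_invariant_step. Qed.

Lemma selected_round_start st w : selected (round_start st) w -> selected st w.
Proof. by case=> [[i hi hw]|[[i _]|hw]]; [right; left; exists i | rewrite inE | right; right]. Qed.

Lemma invariant_round_start sig st : invariant sig st -> invariant sig (round_start st).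
Proof.
move=> I; have a0 : 0 < alpha by have := alpha_gt1; lra.
have r0 := inv_rho_gt0 I.
split => //=; try exact: (inv_price_bounds I); try exact: (inv_ustar I);
  try exact: (inv_consistent I); try exact: (inv_price_le_offer I);
  try exact: (inv_rejected I).
- exact: mulr_gt0.
- by move=> i hi; exists (st_rho st); last exact: (inv_cur I hi).
- by move=> i hi; apply: certified_set0; rewrite ltW // mulr_gt0.
- by move=> w /selected_round_start; apply: (inv_selected_in_R I).
- by move=> w /selected_round_start; apply: (inv_selected_accepted I).
Qed.

Lemma round_invariant_start sig st : invariant sig st ->
  round_invariant sig (round_start st) (round_todo st) (round_start st, false)
    (round_todo st).
Proof.
move=> I; split => //=.
- exact: invariant_round_start.
- by rewrite filter_uniq // enum_uniq.
- move=> w; rewrite mem_filter !inE negb_or => /andP [/andP [/andP [hS hu] _] _].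
  case=> [[i hi hw]|[[i _]|hw]]; last by rewrite hw in hu.
    by move: hS => /unionSP; apply; exists i.
  by rewrite inE.
- by move=> w; rewrite mem_filter !inE => /andP [/andP [_ ->] _].
- move=> _ w wR; case hu: (w \in unionS l (st_Scur st) :|: st_ustar st).
    by right; move: hu; rewrite /covered !inE => /orP [->|->]; rewrite ?orbT.
  by left; rewrite mem_filter mem_enum !inE andbT wR andbT; rewrite !inE in hu; rewrite hu.
Qed.

Lemma round_facts sig st : invariant sig st ->
  let st' := round v B alpha beta l sig st in
  [/\ invariant sig st', st_rho st' = alpha * st_rho st,
      stopped l st' \/ flagged st' &
      (st_steps st' <= st_steps st + steps_per_offer * n)%N].
Proof.
move=> I; rewrite roundE.
have := round_invariant_foldl (round_invariant_start I).
case: (foldl _ _ _) => st' done F /=.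
split; [exact: (ri_inv F) | exact: (ri_rho F) | |].
- case: done F => F; first by right; exact: (ri_flagged F).
  left; rewrite /stopped setD_eq0; apply/subsetP => w wR.
  by case: (ri_cover F isT wR).
- have todo_n : (size (round_todo st) <= n)%N.
    by rewrite size_filter (leq_trans (count_size _ _)) // size_enum_ord.
  have := ri_steps F; rewrite /= muln0 addn0 => /leq_trans; apply.
  by rewrite leq_add2l leq_mul2l todo_n orbT.
Qed.

Record initial_invariant sig st (rem : seq 'I_n) : Prop := {
  ii_consistent : consistent sig (st_hist st);
  ii_offers : forall e, e \in st_hist st -> e.1.2 = B /\ e.1.1 \notin rem;
  ii_rejected : forall w q, (w, q, false) \in st_hist st -> w \notin st_R st;
  ii_notin_R : forall w, w \in rem -> w \notin st_R st;
  ii_uniq : uniq rem;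
  ii_steps : (st_steps st + size rem = n)%N }.

Lemma initial_invariant_step sig st u rem :
  initial_invariant sig st (u :: rem) ->
  initial_invariant sig (step1_one B sig st u) rem.
Proof.
move=> II; rewrite step1_oneE.
have /andP [urem uniq_rem] := ii_uniq II.
have uR : u \notin st_R st by apply: (ii_notin_R II); rewrite inE eqxx.
have fresh w : w \in rem -> w != u by move=> hw; apply: contraTneq hw => ->.
split => //=.
- by apply: consistent_rcons => //; apply: (ii_consistent II).
- move=> e; rewrite mem_rcons in_cons => /orP [/eqP -> //|he].
  have [-> hn] := ii_offers II he; split => //; move: hn.
  by rewrite inE negb_or => /andP [].
- move=> w q; rewrite mem_rcons in_cons => /orP [/eqP [-> _ <-] //|he].
  have wR := ii_rejected II he; case: (sig _ _ _) => //; rewrite !inE negb_or wR andbT.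
  by have [_] := ii_offers II he; rewrite /= inE negb_or => /andP [].
- move=> w hw; have wR : w \notin st_R st by apply: (ii_notin_R II); rewrite inE hw orbT.
  by case: (sig _ _ _) => //; rewrite !inE negb_or wR fresh.
- by have := ii_steps II; rewrite /= addSnnS.
Qed.

Lemma initial_invariant_foldl sig st rem : initial_invariant sig st rem ->
  initial_invariant sig (foldl (step1_one B sig) st rem) [::].
Proof. by elim: rem st => [|u rem IH] st II //=; apply/IH/initial_invariant_step. Qed.

Lemma foldl_step1_fields sig (rem : seq 'I_n) st :
  let st' := foldl (step1_one B sig) st rem in
  [/\ st_p st' = st_p st, st_ustar st' = st_ustar st, st_Sprev st' = st_Sprev st,
      st_Scur st' = st_Scur st & st_rho st' = st_rho st].
Proof.
by elim: rem st => [|u rem IH] st //=; have [-> -> -> -> ->] := IH (step1_one B sig st u).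
Qed.

Lemma init_facts sig : let st := init_state B alpha eps sig in
  [/\ invariant sig st, st_rho st = eps / alpha & st_steps st = n].
Proof.
have r0 : 0 < eps / alpha by rewrite divr_gt0 //; have := alpha_gt1; lra.
pose st0 : state R n := St [::] (fun _ => B) set0 set0 (fun _ => set0) (fun _ => set0) (eps / alpha) 0%N.
have II : initial_invariant sig st0 (enum 'I_n).
  split => //=; [exact: consistent_nil | by move=> w; rewrite inE |
    exact: enum_uniq | exact: size_enum_ord].
have {}II := initial_invariant_foldl II.
have [ep eu eP eS er] := foldl_step1_fields sig (enum 'I_n) st0.
rewrite /init_state -/st0; set st := foldl _ _ _ in II ep eu eP eS er *.
have none w : ~ selected st w by case=> [[i _]|[[i _]|]]; rewrite ?eP ?eS ?eu inE.
split; [split | by [] | by have := ii_steps II; rewrite addn0].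
- by rewrite er.
- by move=> w; rewrite ep /=; have := vbound_ge0; have := B_gt0; move=> *; apply/andP; lra.
- by move=> i _; rewrite eP; exists 1; last exact: certified_set0.
- by move=> i _; rewrite eS er; apply/certified_set0/ltW.
- by rewrite /feasible eu psum0 v0 subr0; split; [apply: ltW | ].
- exact: (ii_consistent II).
- by move=> w q a he; rewrite ep; have [/= ->] := ii_offers II he.
- exact: (ii_rejected II).
- by move=> w /none.
- by move=> w /none.
Qed.

Lemma state_after_facts sig t : let st := state_after v B alpha beta eps l sig t in
  [/\ invariant sig st, st_rho st = eps / alpha * alpha ^+ t,
      (st_steps st <= n + t * (steps_per_offer * n))%N &
      (0 < t)%N -> stopped l st \/ flagged st].
Proof.
elim: t => [|t [I er es _]] /=.
  by have [I er es] := init_facts sig; rewrite expr0 mulr1 es addn0.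
have [I' er' stop es'] := round_facts I.
split => //; first by rewrite er' er exprS; ring.
by move: es es'; rewrite mulSn; lia.
Qed.

Lemma process_answer_hist a st u :
  st_hist (process_answer a st u).1 = rcons (st_hist st) (u, offer st u, a).
Proof. by rewrite /process_answer; case: a => //=; case: ifP. Qed.

Lemma process_prefix sig sd u :
  prefix (st_hist sd.1) (st_hist (process v B beta l sig sd u).1).
Proof.
case: sd => st []; first exact: prefix_refl.
by rewrite processE process_answer_hist prefix_rcons.
Qed.

Lemma process_agree sig sig' sd u :
  consistent sig (st_hist (process v B beta l sig' sd u).1) ->
  process v B beta l sig sd u = process v B beta l sig' sd u.
Proof.
case: sd => st [] //.
by rewrite !processE process_answer_hist => /consistent_last /= ->.
Qed.

Lemma round_prefix sig st :
  prefix (st_hist st) (st_hist (round v B alpha beta l sig st)).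
Proof. by rewrite roundE; apply: (foldl_prefix (hist := fun sd => st_hist sd.1)) => *; apply: process_prefix. Qed.

Lemma round_agree sig sig' st :
  consistent sig (st_hist (round v B alpha beta l sig' st)) ->
  round v B alpha beta l sig st = round v B alpha beta l sig' st.
Proof.
rewrite !roundE => h; congr fst.
by apply: (foldl_agree (hist := fun sd => st_hist sd.1)) h => *;
  [apply: process_prefix | apply: process_agree].
Qed.

Lemma init_agree sig sig' :
  consistent sig (st_hist (init_state B alpha eps sig')) ->
  init_state B alpha eps sig = init_state B alpha eps sig'.
Proof.
apply: (foldl_agree (hist := @st_hist R n)) => x y; rewrite !step1_oneE /=.
  exact: prefix_rcons.
by move/consistent_last => /= ->.
Qed.

Lemma state_after_prefix sig t1 t2 : (t1 <= t2)%N ->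
  prefix (st_hist (state_after v B alpha beta eps l sig t1))
         (st_hist (state_after v B alpha beta eps l sig t2)).
Proof.
move/subnK => <-; elim: (t2 - t1)%N => [|k IH]; first exact: prefix_refl.
by rewrite addSn; apply: prefix_trans IH (round_prefix _ _).
Qed.

Lemma state_after_agree sig sig' t :
  consistent sig (st_hist (state_after v B alpha beta eps l sig' t)) ->
  state_after v B alpha beta eps l sig t = state_after v B alpha beta eps l sig' t.
Proof.
elim: t => [|t IH] h; first exact: init_agree.
have h' := consistent_prefix (round_prefix _ _) h.
by rewrite /state_after /= -!/(state_after _ _ _ _ _ _ _ _) (IH h'); apply: round_agree.
Qed.

Lemma candidatesP st X : X \in candidates l st ->
  (exists2 i, (i < l)%N & X = st_Sprev st i) \/
  (exists2 i, (i < l)%N & X = st_Scur st i) \/ X = st_ustar st.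
Proof.
rewrite /candidates !mem_cat => /orP [/mapP [i]|/orP [/mapP [i]|]].
- by rewrite mem_iota add0n => /andP [_ hi] ->; left; exists i.
- by rewrite mem_iota add0n => /andP [_ hi] ->; right; left; exists i.
- by rewrite inE => /eqP ->; right; right.
Qed.

Lemma best_ind st (P : {set 'I_n} -> Prop) :
  P set0 -> {in candidates l st, forall X, P X} -> P (best v l st).
Proof.
move=> P0 Pc; rewrite /best; apply: foldl_pick_ind.
  by case E: (candidates l st) => [|X s] //=; apply: Pc; rewrite E inE eqxx.
by case E: (candidates l st) => [|X s] //= Y hY; apply: Pc; rewrite E inE hY orbT.
Qed.

Lemma best_facts sig st : invariant sig st ->
  feasible (st_p st) (best v l st) /\ forall w, w \in best v l st -> selected st w.
Proof.
move=> I; apply: (best_ind (P := fun W =>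
  feasible (st_p st) W /\ forall w, w \in W -> selected st w)).
  split; last by move=> w; rewrite inE.
  by rewrite /feasible psum0 v0 subr0 ltW.
move=> X /candidatesP [[i hi ->]|[[i hi ->]|->]].
- by split; [exact: certifiable_feasible (inv_prev I hi) | move=> w hw; left; exists i].
- split; last by move=> w hw; right; left; exists i.
  by apply: certifiable_feasible; exists (st_rho st); [exact: (inv_rho_gt0 I) | exact: (inv_cur I hi)].
- by split; [exact: (inv_ustar I) | move=> w hw; right; right].
Qed.

Section Outcome.
Variables (sig : profile R n) (M : nat).
Local Notation st := (state_after v B alpha beta eps l sig M).
Local Notation W := (winners v B alpha beta eps l sig M).
Local Notation pay := (payment v B alpha beta eps l sig M).

Lemma outcome_invariant : invariant sig st.
Proof. by have [] := state_after_facts sig M. Qed.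

Lemma winners_feasible : feasible pay W.
Proof. by have [] := best_facts outcome_invariant. Qed.

Lemma winner_accepted w : w \in W -> (w, pay w, true) \in st_hist st.
Proof.
by have [_ sel] := best_facts outcome_invariant => /sel /(inv_selected_accepted outcome_invariant).
Qed.

Lemma rejected_notin_winners w q : (w, q, false) \in st_hist st -> w \notin W.
Proof.
have [_ sel] := best_facts outcome_invariant => rej; apply/negP => /sel.
by move/(inv_selected_in_R outcome_invariant); rewrite (negbTE (inv_rejected outcome_invariant rej)).
Qed.

Lemma payment_le_offer w q a : (w, q, a) \in st_hist st -> pay w <= q.
Proof. exact: (inv_price_le_offer outcome_invariant). Qed.

End Outcome.

Lemma bfm_budget_feasible : budget_feasible v B alpha beta eps l.
Proof. by move=> sig M _; have [] := winners_feasible sig M. Qed.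

Lemma bfm_nonneg_surplus : nonneg_surplus v B alpha beta eps l.
Proof. by move=> sig M _; have [] := winners_feasible sig M. Qed.

Lemma flagged_rho_lt sig st : invariant sig st -> flagged st ->
  st_rho st < vbound + vbound *+ n.
Proof.
move=> I [j [u [_ _ _]]]; set X := u |: _ => rho_lt.
have vX := le_vbound X.
suff : - (vbound *+ n) <= psum (st_p st) X by lra.
apply: le_trans (_ : \sum_(w in X) (- vbound) <= _).
  rewrite sumr_const mulNrn lerN2; apply: (ler_wpMn2l vbound_ge0).
  by rewrite (leq_trans (max_card _)) // card_ord.
by apply: ler_sum => w _; case/andP: (inv_price_bounds I w).
Qed.

Lemma stopped_eventually sig :
  exists2 t, (0 < t)%N & stopped l (state_after v B alpha beta eps l sig t).
Proof.
set K := vbound + vbound *+ n; set e := eps / alpha.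
have a1 := alpha_gt1; have e0 : 0 < e by rewrite divr_gt0 //; lra.
have d0 : 0 < e * (alpha - 1) by rewrite mulr_gt0 // subr_gt0.
have K0 : 0 <= K / (e * (alpha - 1)).
  by rewrite divr_ge0 ?addr_ge0 ?mulrn_wge0 ?vbound_ge0 // ltW.
set t := (Num.Def.archi_bound (K / (e * (alpha - 1)))).+1.
have Kt : K < t%:R * (e * (alpha - 1)).
  by rewrite -ltr_pdivrMr //; apply: lt_le_trans (archi_boundP K0) _; rewrite ler_nat.
exists t => //; have [I er _ /(_ isT) [//|fl]] := state_after_facts sig t.
have := flagged_rho_lt I fl; rewrite er -/e -/K => rho_lt.
have grow : t%:R * (e * (alpha - 1)) <= e * alpha ^+ t.
  apply: le_trans (ler_wpM2l (ltW e0) (bernoulli_ineq t (ltW a1))).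
  by rewrite [e * (1 + _)]mulrDr mulr1 mulrCA lerDr ltW.
by have := lt_trans (lt_le_trans Kt grow) rho_lt; rewrite ltxx.
Qed.

Lemma bfm_terminates : terminates v B alpha beta eps l.
Proof.
move=> sig; have [t t0 stop_t] := stopped_eventually sig.
have exP : exists t, (0 < t)%N && stopped l (state_after v B alpha beta eps l sig t).
  by exists t; rewrite t0.
case: (ex_minnP exP) => M /andP [M0 stopM] minM; exists M; do 2!split => //.
move=> k /andP [k0 kM]; apply/negP => stopk.
by have := minM k; rewrite k0 stopk leqNgt kM => /(_ isT).
Qed.

Lemma reaches_offer sig M h i q : reaches v B alpha beta eps l sig M h i q ->
  (i, q, sig i h q) \in final_history v B alpha beta eps l sig M.
Proof.
case=> a [s e]; have I := outcome_invariant sig M.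
have -> : sig i h q = a.
  apply: (consistent_last (e := (i, q, a))); apply: consistent_prefix (inv_consistent I).
  by rewrite /final_history in e; rewrite e prefix_prefix.
by rewrite e mem_cat mem_rcons inE eqxx.
Qed.

Lemma first_stop_agree sig sig' M M' :
  first_stop v B alpha beta eps l sig M -> first_stop v B alpha beta eps l sig' M' ->
  consistent sig (final_history v B alpha beta eps l sig' M') ->
  M = M' /\ state_after v B alpha beta eps l sig M' = state_after v B alpha beta eps l sig' M'.
Proof.
move=> [M0 [stopM minM]] [M0' [stopM' minM']] h.
have agree t : (t <= M')%N ->
    state_after v B alpha beta eps l sig t = state_after v B alpha beta eps l sig' t.
  by move=> tM; apply/state_after_agree/(consistent_prefix (state_after_prefix sig' tM)).
split; last exact: agree.
case: (ltngtP M M') => // ltM.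
- by have := minM' M; rewrite M0 ltM -(agree M (ltnW ltM)) stopM => /(_ isT).
- by have := minM M'; rewrite M0' ltM (agree M' (leqnn _)) stopM' => /(_ isT).
Qed.

Variable c : 'I_n -> R.
Local Notation utility := (utility v c B alpha beta eps l).
Local Notation OPT := (OPT v c B).

Lemma utility_truthful_ge0 sig M i : sig i = truthful c i -> 0 <= utility sig M i.
Proof.
move=> truth; rewrite /utility; case: ifP => // /winner_accepted win.
have [H1] := consistent_mem (inv_consistent (outcome_invariant sig M)) win.
by rewrite truth /truthful /payment subr_ge0.
Qed.

Lemma utility_rejected sig M i q :
  (i, q, false) \in final_history v B alpha beta eps l sig M -> utility sig M i = 0.
Proof. by move/rejected_notin_winners => /negbTE; rewrite /utility => ->. Qed.

Lemma utility_underpriced sig M i q a :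
  (i, q, a) \in final_history v B alpha beta eps l sig M -> q < c i ->
  utility sig M i <= 0.
Proof.
move=> /payment_le_offer pay_le lt_c; rewrite /utility; case: ifP => // _.
by rewrite subr_le0 ltW // (le_lt_trans pay_le).
Qed.

Lemma bfm_individually_rational : individually_rational v c B alpha beta eps l.
Proof. by move=> sig i M truth _; apply: utility_truthful_ge0. Qed.

Lemma bfm_obviously_strategyproof : obviously_strategyproof v c B alpha beta eps l.
Proof.
move=> i s' sig1 sig2 M1 M2 h q truth1 dev2 _ _ /reaches_offer m1 /reaches_offer m2.
rewrite truth1 /truthful in m1; rewrite dev2 in m2; rewrite /truthful.
case: (lerP (c i) q) => ci_q differ.
- move: differ m2; case: (s' h q) => // _ /utility_rejected ->.
  exact: utility_truthful_ge0.
- rewrite leNgt ci_q in m1; rewrite (utility_rejected m1).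
  exact: utility_underpriced m2 ci_q.
Qed.

Lemma bfm_truthful : truthful_mech v c B alpha beta eps l.
Proof.
move=> sig i s' M1 M2 stop1 stop2.
set sig1 := upd sig i (truthful c i); set sig2 := upd sig i s'.
have truth1 : sig1 i = truthful c i by rewrite /sig1 /upd eqxx.
set H2 := final_history v B alpha beta eps l sig2 M2.
case: (boolP (has (fun e : event R n => (e.1.1 == i) && (e.2 != (c i <= e.1.2))) H2)).
  case/hasP => [[[w q] a] hm /= /andP [/eqP wi differ]]; subst w.
  apply: le_trans (utility_truthful_ge0 M1 truth1).
  case: a hm differ => hm differ; last by rewrite (utility_rejected hm).
  by apply: utility_underpriced hm _; rewrite ltNge; move: differ; case: (c i <= q).
move/hasPn => same.
have h : consistent sig1 H2.
  apply: consistent_upd_truthful (inv_consistent (outcome_invariant sig2 M2)) _.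
  by move=> e /same; case: eqP => // -> /negPn /eqP.
have [eM est] := first_stop_agree stop1 stop2 h; subst M1.
by rewrite /utility /winners /payment est.
Qed.

Lemma le_OPT S : csum c S <= B -> v S - csum c S <= OPT.
Proof.
by move=> h; apply: (le_bigmax_cond 0 (P := fun S => csum c S <= B)
  (fun S => v S - csum c S) h).
Qed.

Lemma OPT_ge0 : 0 <= OPT.
Proof. by have := @le_OPT set0; rewrite /csum big_set0 v0 subr0; apply; apply: ltW. Qed.

(* Both S_j and {u} are affordable at cost, and v(S_j + u) <= v(S_j) + v(u)
   by submodularity. *)
Lemma flagged_rho_lt_OPT st : invariant (all_truthful c) st -> flagged st ->
  st_rho st < 2 * OPT.
Proof.
move=> I [j [u [hj hu hus rho_lt]]].
have cost_le w : selected st w -> c w <= st_p st w.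
  move=> hw; have [H1] := consistent_mem (inv_consistent I) (inv_selected_accepted I hw).
  by rewrite /all_truthful /truthful.
have cu : c u <= st_p st u by apply: cost_le; right; right; rewrite hus inE.
have pu : st_p st u <= B by case/andP: (inv_price_bounds I u).
have cS : csum c (st_Scur st j) <= psum (st_p st) (st_Scur st j).
  by apply: ler_sum => w hw; apply: cost_le; right; left; exists j.
have [pS _] : feasible (st_p st) (st_Scur st j).
  by apply: certifiable_feasible; exists (st_rho st); [exact: (inv_rho_gt0 I) | exact: (inv_cur I hj)].
have optS := le_OPT (le_trans cS pS).
have optu : v [set u] - c u <= OPT.
  by have := @le_OPT [set u]; rewrite /csum big_set1; apply; apply: le_trans cu pu.
have := v_submod (sub0set (st_Scur st j)) hu; rewrite setU0 v0 subr0 => sub.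
rewrite psumU1 // in rho_lt; lra.
Qed.

Lemma last_round_bound k : first_stop v B alpha beta eps l (all_truthful c) k.+2 ->
  alpha ^+ k < 2 * (1 + OPT / eps).
Proof.
case=> _ [_ minM].
have [I er _ /(_ isT) [stop|fl]] := state_after_facts (all_truthful c) k.+1.
  by have := minM k.+1; rewrite /= ltnSn stop => /(_ isT).
have a0 : 0 < alpha by have := alpha_gt1; lra.
have := flagged_rho_lt_OPT I fl; rewrite er exprS mulrA divfK ?gt_eqF // => rho_lt.
rewrite -(ltr_pM2l eps_gt0) mulrCA mulrDr mulr1 mulrCA divff ?gt_eqF // mulr1.
have := OPT_ge0; have := eps_gt0; lra.
Qed.

Lemma rounds_bound M : first_stop v B alpha beta eps l (all_truthful c) M ->
  M.+1%:R <= (3 + (ln alpha)^-1) * (1 + ln (1 + OPT / eps)).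
Proof.
move=> stop; have [M0 _] := stop.
have y1 : 1 <= 1 + OPT / eps by rewrite lerDl divr_ge0 // ?OPT_ge0 // ltW.
set L := ln (1 + OPT / eps); have L0 : 0 <= L := ln_ge0 y1.
have ia : 0 < (ln alpha)^-1 by rewrite invr_gt0 ln_gt0.
have : 0 <= (ln alpha)^-1 * (1 + L) by rewrite mulr_ge0 ?addr_ge0 // ltW.
rewrite mulrDl; case: M M0 stop => [//|[_ _|k _ stop]] hia; first by lra.
have := ln_pow_lt alpha_gt1 (lt_le_trans ltr01 y1) (last_round_bound stop).
by rewrite -/L -addn3 natrD; lra.
Qed.

Lemma total_steps_le sig M :
  (total_steps v B alpha beta eps l sig M <= 6 * n.+1 * M.+1)%N.
Proof.
have [_ _ steps _] := state_after_facts sig M.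
rewrite /total_steps; set st := state_after _ _ _ _ _ _ _ _ in steps *.
have -> : size (candidates l st) = (l + l + 1)%N.
  by rewrite /candidates !size_cat !size_map !size_iota /=; lia.
have l2 : (l <= 2)%N by case: l12 => ->.
have : (M * (steps_per_offer * n) <= 6 * (M * n))%N.
  by rewrite mulnCA leq_mul2r /steps_per_offer; apply/orP; right; lia.
have -> : (6 * n.+1 * M.+1 = 6 * (M * n) + 6 * n + 6 * M + 6)%N.
  by rewrite mulnA -!mulnA mulSn mulnS; ring.
by move: steps; set X := (M * n)%N; set Y := (M * _)%N; lia.
Qed.

Lemma bfm_runtime : runtime_bound v c B alpha beta eps l (6 * (3 + (ln alpha)^-1)).
Proof.
move=> M stop.
have steps : (total_steps v B alpha beta eps l (all_truthful c) M)%:R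
             <= 6 * n.+1%:R * M.+1%:R :> R.
  by rewrite -!natrM ler_nat total_steps_le.
have n0 : (0 : R) <= 6 * n.+1%:R by rewrite mulr_ge0.
apply: le_trans steps _; apply: le_trans (ler_wpM2l n0 (rounds_bound stop)) _.
by rewrite le_eqVlt; apply/orP; left; apply/eqP; ring.
Qed.

End Mechanism.

Theorem theorem4p1 (R : realType) (alpha : R) :
  1 < alpha ->
  exists C : R, forall (n : nat) (v : {set 'I_n} -> R) (c : 'I_n -> R)
                       (B beta eps : R) (l : nat),
    v set0 = 0 -> (forall S, 0 <= v S) -> submodular v ->
    (forall u, 0 <= c u) ->
    0 < B -> 1 < beta -> 0 < eps -> (l = 1 \/ l = 2)%N ->
    [/\ terminates v B alpha beta eps l,
        budget_feasible v B alpha beta eps l,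
        obviously_strategyproof v c B alpha beta eps l,
        truthful_mech v c B alpha beta eps l &
        [/\ individually_rational v c B alpha beta eps l,
             nonneg_surplus v B alpha beta eps l &
             runtime_bound v c B alpha beta eps l C]].
Proof.
move=> alpha_gt1; exists (6 * (3 + (ln alpha)^-1)).
move=> n v c B beta eps l v0 v_ge0 v_submod _ B_gt0 beta_gt1 eps_gt0 l12.
split; [exact: bfm_terminates | exact: bfm_budget_feasible |
        exact: bfm_obviously_strategyproof | exact: bfm_truthful | split].
- exact: bfm_individually_rational.
- exact: bfm_nonneg_surplus.
- exact: bfm_runtime.
Qed.
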